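(* Consider the planar Problem B with $w=e=(0,1)$ (see context). If $(\rho,C_r,C_b,\varphi)$ is a local solution on $[-\delta,\delta]$, let $\rho_0=\rho(0)$ and $d_0=d_r(0)\,(=d_b(0))$ and $k_0=\rho_0/d_0$. Then $$k_0\le\frac{(\Delta_r-\Delta_b)^2}{4\Delta_r\Delta_b},\qquad \Delta_r=\frac{n_r}{n_r-1},\ \Delta_b=\frac{n_b}{n_b-1}.$$ In other words, if $k_0>\frac{(\Delta_r-\Delta_b)^2}{4\Delta_r\Delta_b}$ there is no local solution with these values of $\rho(0)$ and $d_r(0)$.
   Context: Planar setting: $x(t)=(\sin t,\cos t)$, $e=(0,1)$; refractive indices $n_b>n_r>1$, outside vacuum; $\Phi_\kappa(s)=s-\sqrt{\kappa^2-1+s^2}$. For positive $\rho\in C^2$, the curve $\rho(t)x(t)$ has outer unit normal $\nu_\rho(t)=\dfrac{(\rho\sin t-\rho'\cos t,\ \rho'\sin t+\rho\cos t)}{\sqrt{\rho^2+\rho'^2}}$. For $c\in\{r,b\}$ and a constant $C_c$: $m_c(t)=\frac1{n_c}\big(x(t)-\Phi_{n_c}(x(t)\cdot\nu_\rho(t))\nu_\rho(t)\big)$, $d_c(t)=\dfrac{C_c-\rho(t)(1-\cos t)}{n_c-e\cdot m_c(t)}$, $f_c(t)=\rho(t)x(t)+d_c(t)m_c(t)$; the curve $f_c$ refracts the color-$c$ ray $m_c(t)$ at $f_c(t)$ into $e$ by Snell's law. A local solution of Problem B: $\delta\in(0,\pi/2)$, positive $\rho\in C^2[-\delta,\delta]$,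 constants $C_r,C_b$ with $d_r,d_b>0$ and $f_r,f_b$ having a normal at every point, and a $C^1$ map $\varphi:[-\delta,\delta]\to[-\delta,\delta]$ with $f_r(t)=f_b(\varphi(t))$ for all $|t|\le\delta$. *)

From Stdlib Require Import Reals.
Open Scope R_scope.

Definition Icl (delta t : R) : Prop := - delta <= t <= delta.

Definition deriv_within (D : R -> Prop) (f : R -> R) (x l : R) : Prop :=
  forall eps : R, 0 < eps -> exists del : R, 0 < del /\
    forall h : R, h <> 0 -> Rabs h < del -> D (x + h) ->
      Rabs ((f (x + h) - f x) / h - l) < eps.

Definition cont_within (D : R -> Prop) (f : R -> R) (x : R) : Prop :=
  forall eps : R, 0 < eps -> exists del : R, 0 < del /\
    forall y : R, D y -> Rabs (y - x) < del -> Rabs (f y - f x) < eps.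

Definition C1_on (D : R -> Prop) (f f1 : R -> R) : Prop :=
  (forall t, D t -> deriv_within D f t (f1 t)) /\
  (forall t, D t -> cont_within D f1 t).

Definition C2_on (D : R -> Prop) (f f1 f2 : R -> R) : Prop :=
  (forall t, D t -> deriv_within D f t (f1 t)) /\ C1_on D f1 f2.

Definition Phi (kappa s : R) : R := s - sqrt (kappa ^ 2 - 1 + s ^ 2).

(* Outer unit normal of the curve rho(t) x(t), x(t) = (sin t, cos t);
   rho1 is rho'. *)
Definition nu (rho rho1 : R -> R) (t : R) : R * R :=
  let s := sqrt (rho t ^ 2 + rho1 t ^ 2) in
  ((rho t * sin t - rho1 t * cos t) / s,
   (rho1 t * sin t + rho t * cos t) / s).

Definition mc (n : R) (rho rho1 : R -> R) (t : R) : R * R :=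
  let nv := nu rho rho1 t in
  let p := sin t * fst nv + cos t * snd nv in
  ((sin t - Phi n p * fst nv) / n, (cos t - Phi n p * snd nv) / n).

(* d_c(t) = (C - rho(t)(1 - cos t)) / (n - e . m_c(t)), e = (0,1). *)
Definition dc (n C : R) (rho rho1 : R -> R) (t : R) : R :=
  (C - rho t * (1 - cos t)) / (n - snd (mc n rho rho1 t)).

Definition fc (n C : R) (rho rho1 : R -> R) (t : R) : R * R :=
  (rho t * sin t + dc n C rho rho1 t * fst (mc n rho rho1 t),
   rho t * cos t + dc n C rho rho1 t * snd (mc n rho rho1 t)).

(* The curve f_c has a normal at every point of D: it is differentiable
   (componentwise, relative to D) with a nonzero tangent vector. *)
Definition has_normal_everywhere (D : R -> Prop) (g : R -> R * R) : Prop :=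
  forall t, D t -> exists v1 v2 : R,
    deriv_within D (fun s => fst (g s)) t v1 /\
    deriv_within D (fun s => snd (g s)) t v2 /\
    (v1 <> 0 \/ v2 <> 0).

Definition local_solution (nr nb delta : R) (rho rho1 rho2 : R -> R)
    (Cr Cb : R) (phi phi1 : R -> R) : Prop :=
  0 < delta < PI / 2 /\
  (forall t, Icl delta t -> 0 < rho t) /\
  C2_on (Icl delta) rho rho1 rho2 /\
  (forall t, Icl delta t -> 0 < dc nr Cr rho rho1 t) /\
  (forall t, Icl delta t -> 0 < dc nb Cb rho rho1 t) /\
  has_normal_everywhere (Icl delta) (fc nr Cr rho rho1) /\
  has_normal_everywhere (Icl delta) (fc nb Cb rho rho1) /\
  (forall t, Icl delta t -> Icl delta (phi t)) /\
  C1_on (Icl delta) phi phi1 /\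
  (forall t, Icl delta t -> fc nr Cr rho rho1 t = fc nb Cb rho rho1 (phi t)).

Definition DeltaN (n : R) : R := n / (n - 1).

From Stdlib Require Import Reals Lra.
Open Scope R_scope.

(* The curves [f_r] and [f_b o phi] coincide, and by Snell's law both
   [n_r m_r t - e] and [n_b m_b (phi t) - e] are orthogonal to their common tangent,
   hence parallel.  By the intermediate value theorem [phi] has a fixed point [z];
   there the two refracted rays coincide, which forces [z = 0], [rho'(0) = 0] and
   [d_r(0) = d_b(0)].  Differentiating the parallelism and the first coordinate of
   [f_r = f_b o phi] at [0] gives, with [q = phi'(0)] and [a = rho''(0) / rho(0)],
     [Delta_r - a = (Delta_b - a) q]  and
     [rho_0 + d_0 (Delta_r - a) / Delta_r = (rho_0 + d_0 (Delta_b - a) / Delta_b) q];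
   eliminating [q] yields [k_0 = - (Delta_r - a) (Delta_b - a) / (Delta_r Delta_b)],
   which is at most [(Delta_r - Delta_b)^2 / (4 Delta_r Delta_b)]. *)

(** * Derivatives relative to a set *)

Definition punctured (D : R -> Prop) (x y : R) : Prop := D y /\ y <> x.

Definition slope (f : R -> R) (x y : R) : R := (f y - f x) / (y - x).

Lemma deriv_within_slope_limit D f x l :
  deriv_within D f x l <-> limit1_in (slope f x) (punctured D x) l x.
Proof.
  split.
  - intros H eps Heps. destruct (H eps Heps) as [del [Hdel Hf]].
    exists del. split; [lra|]. intros y [[Dy Ny] Hy]. simpl in *. unfold R_dist in *.
    specialize (Hf (y - x)). replace (x + (y - x)) with y in Hf by ring.
    apply Hf; auto. intro; apply Ny; lra.
  - intros H eps Heps. destruct (H eps Heps) as [del [Hdel Hf]].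
    exists del. split; [lra|]. intros h Hh Hhdel Dh.
    specialize (Hf (x + h)). simpl in Hf. unfold R_dist, slope in Hf.
    replace (x + h - x) with h in Hf by ring.
    apply Hf. split; [split; auto; intro; apply Hh; lra|].
    replace (x + h - x) with h by ring. exact Hhdel.
Qed.

Lemma limit1_in_ext f g D l x :
  (forall y, D y -> f y = g y) -> limit1_in f D l x -> limit1_in g D l x.
Proof.
  intros E H eps Heps. destruct (H eps Heps) as [a [Ha Hf]].
  exists a. split; auto. intros y [Dy Hy]. rewrite <- E; auto.
Qed.

Lemma limit1_in_const D a x : limit1_in (fun _ => a) D a x.
Proof.
  intros eps Heps. exists 1. split; [lra|]. intros y _. simpl. unfold R_dist.
  rewrite Rminus_diag, Rabs_R0. lra.
Qed.

Lemma limit1_in_id D x : limit1_in (fun y => y) D x x.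
Proof. intros eps Heps. exists eps. split; [lra|]. intros y [_ H]. exact H. Qed.

Section DerivWithin.

Context {D : R -> Prop}.

Lemma deriv_within_limit {f x l} :
  deriv_within D f x l -> limit1_in f (punctured D x) (f x) x.
Proof.
  intro H. apply deriv_within_slope_limit in H.
  assert (H2 : limit1_in (fun y => f x + slope f x y * (y - x)) (punctured D x)
                 (f x + l * (x - x)) x).
  { apply limit_plus; [apply limit1_in_const|].
    apply limit_mul; auto. apply limit_minus; [apply limit1_in_id|apply limit1_in_const]. }
  replace (f x + l * (x - x)) with (f x) in H2 by ring.
  eapply limit1_in_ext; [|exact H2]. intros y [_ Hy]. unfold slope. field. lra.
Qed.

Lemma deriv_within_cont_within {f x l} : deriv_within D f x l -> cont_within D f x.
Proof.
  intros H eps Heps. destruct (deriv_within_limit H eps Heps) as [a [Ha Hf]].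
  exists a. split; auto. intros y Dy Hy.
  destruct (Req_dec y x) as [->|Nyx].
  - rewrite Rminus_diag, Rabs_R0. lra.
  - exact (Hf y (conj (conj Dy Nyx) Hy)).
Qed.

Lemma deriv_within_congr {f g x l l'} :
  deriv_within D f x l -> D x -> (forall y, D y -> f y = g y) -> l = l' ->
  deriv_within D g x l'.
Proof.
  intros H Dx E <- eps Heps. destruct (H eps Heps) as [d [Hd Hf]].
  exists d. split; auto. intros h Hh Hhd Dh. rewrite <- !E; auto.
Qed.

Lemma deriv_within_of_derivable {f x l} :
  derivable_pt_lim f x l -> deriv_within D f x l.
Proof.
  intros H eps Heps. destruct (H eps Heps) as [d Hf].
  exists d. split; [apply cond_pos|]. intros h Hh Hhd _. apply Hf; auto.
Qed.

Lemma deriv_within_const a x : deriv_within D (fun _ => a) x 0.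
Proof.
  apply deriv_within_of_derivable. apply derivable_pt_lim_const.
Qed.

Lemma deriv_within_plus {f g x lf lg} :
  deriv_within D f x lf -> deriv_within D g x lg ->
  deriv_within D (fun y => f y + g y) x (lf + lg).
Proof.
  rewrite !deriv_within_slope_limit. intros Hf Hg.
  eapply limit1_in_ext; [|exact (limit_plus _ _ _ _ _ _ Hf Hg)].
  intros y [_ Hy]. unfold slope. field. lra.
Qed.

Lemma deriv_within_minus {f g x lf lg} :
  deriv_within D f x lf -> deriv_within D g x lg ->
  deriv_within D (fun y => f y - g y) x (lf - lg).
Proof.
  rewrite !deriv_within_slope_limit. intros Hf Hg.
  eapply limit1_in_ext; [|exact (limit_minus _ _ _ _ _ _ Hf Hg)].
  intros y [_ Hy]. unfold slope. field. lra.
Qed.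

Lemma deriv_within_mult {f g x lf lg} :
  deriv_within D f x lf -> deriv_within D g x lg ->
  deriv_within D (fun y => f y * g y) x (lf * g x + f x * lg).
Proof.
  intros Hf Hg. pose proof (deriv_within_limit Hf) as Cf.
  rewrite deriv_within_slope_limit in *.
  pose proof (limit_plus _ _ _ _ _ _
    (limit_mul _ _ _ _ _ _ Hf (limit1_in_const (punctured D x) (g x) x))
    (limit_mul _ _ _ _ _ _ Cf Hg)) as H.
  eapply limit1_in_ext; [|exact H]. intros y [_ Hy]. unfold slope. field. lra.
Qed.

Lemma deriv_within_inv {f x lf} :
  (forall y, D y -> f y <> 0) -> f x <> 0 -> deriv_within D f x lf ->
  deriv_within D (fun y => / f y) x (- lf / (f x * f x)).
Proof.
  intros Nz Nx Hf. pose proof (deriv_within_limit Hf) as Cf.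
  rewrite deriv_within_slope_limit in *.
  pose proof (limit_mul _ _ _ _ _ _ (limit_Ropp _ _ _ _ Hf)
    (limit_mul _ _ _ _ _ _ (limit_inv _ _ _ _ Cf Nx)
       (limit1_in_const (punctured D x) (/ f x) x))) as H.
  replace (- lf / (f x * f x)) with (- lf * (/ f x * / f x)) by (field; auto).
  eapply limit1_in_ext; [|exact H].
  intros y [Dy Hy]. unfold slope. field. repeat split; auto. lra.
Qed.

Lemma deriv_within_unique {f x l1 l2} :
  adhDa (punctured D x) x ->
  deriv_within D f x l1 -> deriv_within D f x l2 -> l1 = l2.
Proof.
  intros Hadh H1 H2. rewrite deriv_within_slope_limit in *.
  exact (single_limit _ _ _ _ _ Hadh H1 H2).
Qed.

Lemma deriv_within_const_on_eq_0 {f x l} c :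
  adhDa (punctured D x) x -> D x -> (forall y, D y -> f y = c) ->
  deriv_within D f x l -> l = 0.
Proof.
  intros Hadh Dx Hc Hf.
  exact (deriv_within_unique Hadh Hf
           (deriv_within_congr (deriv_within_const c x) Dx (fun y Dy => eq_sym (Hc y Dy)) eq_refl)).
Qed.

End DerivWithin.

(* The difference quotient of [g] at [f x] is extended by [lg] at [f x] itself,
   so that [f y = f x] for [y] near [x] does no harm. *)
Lemma deriv_within_comp {D E g f x lg lf} :
  (forall y, D y -> E (f y)) ->
  deriv_within E g (f x) lg -> deriv_within D f x lf ->
  deriv_within D (fun y => g (f y)) x (lg * lf).
Proof.
  intros DE Hg Hf. pose proof (deriv_within_limit Hf) as Cf.
  set (a := f x) in *.
  set (G := fun u => if Req_dec_T u a then lg else (g u - g a) / (u - a)).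
  assert (CG : limit1_in (fun y => G (f y)) (punctured D x) lg x).
  { intros eps Heps. destruct (Hg eps Heps) as [d1 [Hd1 Hg1]].
    destruct (Cf d1 Hd1) as [d2 [Hd2 Hf2]]. exists d2. split; auto.
    intros y [[Dy Ny] Hy]. simpl. unfold R_dist, G.
    destruct (Req_dec_T (f y) a) as [_|ne].
    - rewrite Rminus_diag, Rabs_R0. lra.
    - specialize (Hg1 (f y - a)). replace (a + (f y - a)) with (f y) in Hg1 by ring.
      apply Hg1; auto.
      + intro; apply ne; lra.
      + exact (Hf2 y (conj (conj Dy Ny) Hy)). }
  rewrite deriv_within_slope_limit in *.
  eapply limit1_in_ext; [|exact (limit_mul _ _ _ _ _ _ CG Hf)].
  intros y [Dy Hy]. unfold slope, G. fold a.
  destruct (Req_dec_T (f y) a) as [->|ne].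
  - unfold Rdiv. rewrite !Rminus_diag. ring.
  - field. split; lra.
Qed.

Lemma deriv_within_comp_derivable {D g f x lg lf} :
  derivable_pt_lim g (f x) lg -> deriv_within D f x lf ->
  deriv_within D (fun y => g (f y)) x (lg * lf).
Proof.
  intros Hg Hf.
  exact (deriv_within_comp (E := fun _ => True) (fun _ _ => I)
           (deriv_within_of_derivable Hg) Hf).
Qed.

Lemma deriv_within_reparam {D f g phi x lphi lg} :
  (forall y, D y -> D (phi y)) -> D x -> (forall y, D y -> f y = g (phi y)) ->
  deriv_within D phi x lphi -> deriv_within D g (phi x) lg ->
  deriv_within D f x (lg * lphi).
Proof.
  intros Hmaps Dx E Hphi Hg.
  apply (deriv_within_congr (deriv_within_comp Hmaps Hg Hphi) Dx); [|reflexivity].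
  intros y Dy. symmetry. apply E, Dy.
Qed.

Lemma Icl_adhDa delta x : 0 < delta -> Icl delta x -> adhDa (punctured (Icl delta) x) x.
Proof.
  intros Hd [Hx1 Hx2] alp Ha.
  set (m := Rmin alp delta / 2).
  assert (Hm : 0 < m /\ m < alp /\ m < delta).
  { unfold m. pose proof (Rmin_l alp delta). pose proof (Rmin_r alp delta).
    pose proof (Rmin_glb_lt alp delta 0 Ha Hd). lra. }
  simpl. unfold R_dist, punctured, Icl.
  destruct (Rle_lt_dec 0 x).
  - exists (x - m). replace (x - m - x) with (- m) by ring.
    rewrite Rabs_Ropp, Rabs_pos_eq; lra.
  - exists (x + m). replace (x + m - x) with m by ring. rewrite Rabs_pos_eq; lra.
Qed.

(** * Fixed points of self-maps of [-delta, delta] *)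

Definition clamp (delta t : R) : R := Rmax (- delta) (Rmin delta t).

Lemma clamp_Icl delta t : 0 < delta -> Icl delta (clamp delta t).
Proof. intro. unfold clamp, Icl, Rmax, Rmin. repeat destruct Rle_dec; lra. Qed.

Lemma clamp_id delta t : Icl delta t -> clamp delta t = t.
Proof. unfold clamp, Icl, Rmax, Rmin. intro. repeat destruct Rle_dec; lra. Qed.

Lemma clamp_1_lipschitz delta x y :
  0 < delta -> Rabs (clamp delta y - clamp delta x) <= Rabs (y - x).
Proof.
  intro. pose proof (Rle_abs (y - x)). pose proof (Rle_abs (- (y - x))).
  rewrite Rabs_Ropp in *. apply Rabs_le. unfold clamp, Rmax, Rmin.
  repeat destruct Rle_dec; lra.
Qed.

Lemma continuity_clamp_comp delta f :
  0 < delta -> (forall t, Icl delta t -> cont_within (Icl delta) f t) ->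
  continuity (fun t => f (clamp delta t)).
Proof.
  intros Hd Hf x eps Heps.
  destruct (Hf (clamp delta x) (clamp_Icl delta x Hd) eps Heps) as [a [Ha Hfa]].
  exists a. split; auto. intros y [_ Hy]. simpl in *. unfold R_dist in *.
  apply Hfa; [apply clamp_Icl; auto|].
  pose proof (clamp_1_lipschitz delta x y Hd). lra.
Qed.

Lemma Icl_fixed_point delta phi :
  0 < delta -> (forall t, Icl delta t -> Icl delta (phi t)) ->
  (forall t, Icl delta t -> cont_within (Icl delta) phi t) ->
  exists z, Icl delta z /\ phi z = z.
Proof.
  intros Hd Hmaps Hcont.
  assert (Hg : continuity (fun t => phi (clamp delta t) - t)).
  { intro x. apply (continuity_pt_minus (fun t => phi (clamp delta t)) (fun t => t)).
    - exact (continuity_clamp_comp delta phi Hd Hcont x).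
    - apply derivable_continuous_pt, derivable_pt_id. }
  assert (Dl : Icl delta (- delta)) by (unfold Icl; lra).
  assert (Dr : Icl delta delta) by (unfold Icl; lra).
  destruct (IVT_cor _ (- delta) delta Hg) as [z [Hz Ez]]; [lra| |].
  - rewrite !clamp_id by auto. pose proof (Hmaps _ Dl). pose proof (Hmaps _ Dr).
    unfold Icl in *. nra.
  - assert (Dz : Icl delta z) by (unfold Icl; lra).
    exists z. split; auto. rewrite clamp_id in Ez by auto. lra.
Qed.

(** * The refracted direction m_c *)

Lemma deriv_within_Phi_comp {D g t lg} n :
  1 < n -> D t -> deriv_within D g t lg ->
  deriv_within D (fun y => Phi n (g y)) t
    (lg * (1 - g t / sqrt (n ^ 2 - 1 + g t ^ 2))).
Proof.
  intros Hn Dt Hg.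
  assert (Q : 0 < n ^ 2 - 1 + g t * g t) by nra.
  pose proof (deriv_within_minus Hg (deriv_within_comp_derivable (derivable_pt_lim_sqrt _ Q)
                (deriv_within_plus (deriv_within_const (n ^ 2 - 1) t)
                   (deriv_within_mult Hg Hg)))) as H.
  apply (deriv_within_congr H Dt).
  - intros y _. unfold Phi. do 3 f_equal. ring.
  - pose proof (sqrt_lt_R0 _ Q).
    replace (g t * g t) with (g t ^ 2) in * by ring. field. lra.
Qed.

Lemma Phi_sqr_identity n s :
  0 <= n ^ 2 - 1 + s ^ 2 -> Phi n s ^ 2 - 2 * s * Phi n s = n ^ 2 - 1.
Proof.
  intro Hs. pose proof (sqrt_sqrt _ Hs). unfold Phi. nra.
Qed.

Lemma Phi_index_injective n1 n2 s : 1 < n1 -> 1 < n2 -> Phi n1 s = Phi n2 s -> n1 = n2.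
Proof.
  intros H1 H2 E. unfold Phi in E.
  assert (Hs : sqrt (n1 ^ 2 - 1 + s ^ 2) = sqrt (n2 ^ 2 - 1 + s ^ 2)) by lra.
  apply sqrt_inj in Hs; nra.
Qed.

Section Refraction.

Variables rho rho1 rho2 : R -> R.

(* [speed] is [|(rho x)'|], [(nu_x, nu_y)] is [nu_rho], [incidence] is [x . nu_rho]
   and [(m_x n, m_y n)] is [m_c] for [n = n_c]; the primed functions are their
   derivatives, with [rho2] in the role of [rho'']. *)
Definition speed (y : R) : R := sqrt (rho y ^ 2 + rho1 y ^ 2).
Definition nu_x (y : R) : R := (rho y * sin y - rho1 y * cos y) / speed y.
Definition nu_y (y : R) : R := (rho1 y * sin y + rho y * cos y) / speed y.
Definition incidence (y : R) : R := rho y / speed y.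
Definition m_x (n y : R) : R := (sin y - Phi n (incidence y) * nu_x y) / n.
Definition m_y (n y : R) : R := (cos y - Phi n (incidence y) * nu_y y) / n.

Definition speed' (y : R) : R := (rho y * rho1 y + rho1 y * rho2 y) / speed y.
Definition nu_x' (y : R) : R :=
  (2 * rho1 y * sin y + (rho y - rho2 y) * cos y - nu_x y * speed' y) / speed y.
Definition nu_y' (y : R) : R :=
  ((rho2 y - rho y) * sin y + 2 * rho1 y * cos y - nu_y y * speed' y) / speed y.
Definition incidence' (y : R) : R := (rho1 y - incidence y * speed' y) / speed y.
Definition Phi_incidence' (n y : R) : R :=
  incidence' y * (1 - incidence y / sqrt (n ^ 2 - 1 + incidence y ^ 2)).
Definition m_x' (n y : R) : R :=
  (cos y - (Phi_incidence' n y * nu_x y + Phi n (incidence y) * nu_x' y)) / n.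
Definition m_y' (n y : R) : R :=
  (- sin y - (Phi_incidence' n y * nu_y y + Phi n (incidence y) * nu_y' y)) / n.

Section Pointwise.

Variable y : R.
Hypothesis rho_pos : 0 < rho y.

Lemma speed_pos : 0 < speed y.
Proof. unfold speed. apply sqrt_lt_R0. nra. Qed.

Lemma speed_sqr : speed y * speed y = rho y ^ 2 + rho1 y ^ 2.
Proof. unfold speed. apply sqrt_sqrt. nra. Qed.

Lemma nu_norm : nu_x y ^ 2 + nu_y y ^ 2 = 1.
Proof.
  pose proof speed_pos. pose proof speed_sqr. pose proof (sin2_cos2 y) as E.
  unfold Rsqr in E. unfold nu_x, nu_y.
  transitivity ((rho y ^ 2 + rho1 y ^ 2) * (sin y * sin y + cos y * cos y)
                / (speed y * speed y)); [field; lra|].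
  rewrite E, <- speed_sqr. field. lra.
Qed.

Lemma x_dot_nu : sin y * nu_x y + cos y * nu_y y = incidence y.
Proof.
  pose proof speed_pos. pose proof (sin2_cos2 y) as E. unfold Rsqr in E.
  unfold nu_x, nu_y, incidence.
  transitivity (rho y * (sin y * sin y + cos y * cos y) / speed y); [field; lra|].
  rewrite E. field. lra.
Qed.

Lemma incidence_bounds : 0 < incidence y <= 1.
Proof.
  pose proof speed_pos. pose proof speed_sqr. unfold incidence. split.
  - apply Rdiv_lt_0_compat; lra.
  - apply Rmult_le_reg_r with (speed y); auto.
    unfold Rdiv. rewrite Rmult_assoc, Rinv_l by lra. nra.
Qed.

Lemma mc_components n : mc n rho rho1 y = (m_x n y, m_y n y).
Proof.
  unfold mc. change (nu rho rho1 y) with (nu_x y, nu_y y). cbv zeta. simpl.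
  rewrite x_dot_nu. reflexivity.
Qed.

Lemma dc_eq n C :
  dc n C rho rho1 y = (C - rho y * (1 - cos y)) / (n - m_y n y).
Proof. unfold dc. rewrite mc_components. reflexivity. Qed.

Lemma fc_components n C :
  fc n C rho rho1 y = (rho y * sin y + dc n C rho rho1 y * m_x n y,
                       rho y * cos y + dc n C rho rho1 y * m_y n y).
Proof. unfold fc. rewrite mc_components. reflexivity. Qed.

Variable n : R.
Hypothesis n_gt_1 : 1 < n.

Lemma m_norm : m_x n y ^ 2 + m_y n y ^ 2 = 1.
Proof.
  pose proof nu_norm as U. pose proof x_dot_nu as P. pose proof incidence_bounds.
  pose proof (sin2_cos2 y) as E. unfold Rsqr in E.
  pose proof (Phi_sqr_identity n (incidence y) ltac:(nra)) as F.
  unfold m_x, m_y. set (p := Phi n (incidence y)) in *.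
  apply Rmult_eq_reg_l with (n ^ 2); [|nra].
  transitivity (sin y * sin y + cos y * cos y
                - 2 * p * (sin y * nu_x y + cos y * nu_y y)
                + p ^ 2 * (nu_x y ^ 2 + nu_y y ^ 2)); [field; lra|].
  rewrite E, U, P. lra.
Qed.

Lemma m_y_lt : m_y n y < n.
Proof. pose proof m_norm. nra. Qed.

(* Snell's law: [n m] and [x] have the same component [rho'] along the tangent [(rho x)']. *)
Lemma refraction_tangential :
  n * (m_x n y * (rho1 y * sin y + rho y * cos y)
       + m_y n y * (rho1 y * cos y - rho y * sin y)) = rho1 y.
Proof.
  pose proof speed_pos. pose proof (sin2_cos2 y) as E. unfold Rsqr in E.
  unfold m_x, m_y, nu_x, nu_y.
  transitivity (rho1 y * (sin y * sin y + cos y * cos y)); [field; lra|].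
  rewrite E. ring.
Qed.

End Pointwise.

Section Derivatives.

Variable D : R -> Prop.
Hypothesis rho_deriv : forall t, D t -> deriv_within D rho t (rho1 t).
Hypothesis rho1_deriv : forall t, D t -> deriv_within D rho1 t (rho2 t).
Hypothesis rho_pos : forall t, D t -> 0 < rho t.

Variable t : R.
Hypothesis Dt : D t.

Let deriv_sin := deriv_within_of_derivable (D := D) (derivable_pt_lim_sin t).
Let deriv_cos := deriv_within_of_derivable (D := D) (derivable_pt_lim_cos t).

Lemma deriv_speed : deriv_within D speed t (speed' t).
Proof.
  pose proof (rho_pos t Dt) as Hpos.
  assert (Q : 0 < rho t * rho t + rho1 t * rho1 t) by nra.
  pose proof (deriv_within_comp_derivable (derivable_pt_lim_sqrt _ Q)
    (deriv_within_plus (deriv_within_mult (rho_deriv t Dt) (rho_deriv t Dt))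
                       (deriv_within_mult (rho1_deriv t Dt) (rho1_deriv t Dt)))) as H.
  pose proof (sqrt_lt_R0 _ Q) as Hsqrt.
  apply (deriv_within_congr H Dt).
  - intros y _. unfold speed. f_equal. ring.
  - unfold speed', speed. replace (rho t ^ 2 + rho1 t ^ 2) with (rho t * rho t + rho1 t * rho1 t) by ring.
    field. lra.
Qed.

Lemma deriv_div_speed g lg :
  deriv_within D g t lg ->
  deriv_within D (fun y => g y / speed y) t ((lg - g t / speed t * speed' t) / speed t).
Proof.
  intro Hg.
  assert (Nz : forall y, D y -> speed y <> 0)
    by (intros y Dy; pose proof (speed_pos y (rho_pos y Dy)); lra).
  pose proof (deriv_within_mult Hg (deriv_within_inv Nz (Nz t Dt) deriv_speed)) as H.
  apply (deriv_within_congr H Dt); [reflexivity|].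
  field. exact (Nz t Dt).
Qed.

Lemma deriv_nu_x : deriv_within D nu_x t (nu_x' t).
Proof.
  pose proof (deriv_div_speed _ _ (deriv_within_minus
    (deriv_within_mult (rho_deriv t Dt) deriv_sin)
    (deriv_within_mult (rho1_deriv t Dt) deriv_cos))) as H.
  apply (deriv_within_congr H Dt); [reflexivity|].
  unfold nu_x'. fold (nu_x t). f_equal. ring.
Qed.

Lemma deriv_nu_y : deriv_within D nu_y t (nu_y' t).
Proof.
  pose proof (deriv_div_speed _ _ (deriv_within_plus
    (deriv_within_mult (rho1_deriv t Dt) deriv_sin)
    (deriv_within_mult (rho_deriv t Dt) deriv_cos))) as H.
  apply (deriv_within_congr H Dt); [reflexivity|].
  unfold nu_y'. fold (nu_y t). f_equal. ring.
Qed.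

Lemma deriv_incidence : deriv_within D incidence t (incidence' t).
Proof. exact (deriv_div_speed _ _ (rho_deriv t Dt)). Qed.

Lemma deriv_m_x n : 1 < n -> deriv_within D (m_x n) t (m_x' n t).
Proof.
  intro Hn.
  pose proof (deriv_within_mult (deriv_within_minus deriv_sin
    (deriv_within_mult (deriv_within_Phi_comp n Hn Dt deriv_incidence) deriv_nu_x))
    (deriv_within_const (/ n) t)) as H.
  apply (deriv_within_congr H Dt).
  - intros y _. unfold m_x. field. lra.
  - cbv beta. unfold m_x'. fold (Phi_incidence' n t). field. lra.
Qed.

Lemma deriv_m_y n : 1 < n -> deriv_within D (m_y n) t (m_y' n t).
Proof.
  intro Hn.
  pose proof (deriv_within_mult (deriv_within_minus deriv_cos
    (deriv_within_mult (deriv_within_Phi_comp n Hn Dt deriv_incidence) deriv_nu_y))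
    (deriv_within_const (/ n) t)) as H.
  apply (deriv_within_congr H Dt).
  - intros y _. unfold m_y. field. lra.
  - cbv beta. unfold m_y'. fold (Phi_incidence' n t). field. lra.
Qed.

Lemma deriv_fc n C : 1 < n ->
  exists ld, deriv_within D (dc n C rho rho1) t ld /\
    deriv_within D (fun s => fst (fc n C rho rho1 s)) t
      (rho1 t * sin t + rho t * cos t + (ld * m_x n t + dc n C rho rho1 t * m_x' n t)) /\
    deriv_within D (fun s => snd (fc n C rho rho1 s)) t
      (rho1 t * cos t - rho t * sin t + (ld * m_y n t + dc n C rho rho1 t * m_y' n t)).
Proof.
  intro Hn.
  assert (Nz : forall y, D y -> n - m_y n y <> 0)
    by (intros y Dy; pose proof (m_y_lt y (rho_pos y Dy) n Hn); lra).
  pose proof (deriv_within_mult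
    (deriv_within_minus (deriv_within_const C t)
       (deriv_within_mult (rho_deriv t Dt)
          (deriv_within_minus (deriv_within_const 1 t) deriv_cos)))
    (deriv_within_inv Nz (Nz t Dt)
       (deriv_within_minus (deriv_within_const n t) (deriv_m_y n Hn)))) as Hd.
  assert (Hdc : exists ld, deriv_within D (dc n C rho rho1) t ld).
  { eexists. apply (deriv_within_congr Hd Dt); [|reflexivity].
    intros y Dy. rewrite dc_eq by auto. reflexivity. }
  destruct Hdc as [ld Hdc]. exists ld. split; [exact Hdc|]. split.
  - apply (deriv_within_congr (deriv_within_plus (deriv_within_mult (rho_deriv t Dt) deriv_sin)
             (deriv_within_mult Hdc (deriv_m_x n Hn))) Dt).
    + intros y Dy. rewrite fc_components by auto. reflexivity.
    + reflexivity.
  - apply (deriv_within_congr (deriv_within_plus (deriv_within_mult (rho_deriv t Dt) deriv_cos)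
             (deriv_within_mult Hdc (deriv_m_y n Hn))) Dt).
    + intros y Dy. rewrite fc_components by auto. reflexivity.
    + ring.
Qed.

Hypothesis Dt_adh : adhDa (punctured D t) t.

Lemma m_dot_m' n : 1 < n -> m_x n t * m_x' n t + m_y n t * m_y' n t = 0.
Proof.
  intro Hn.
  pose proof (deriv_within_plus (deriv_within_mult (deriv_m_x n Hn) (deriv_m_x n Hn))
                                (deriv_within_mult (deriv_m_y n Hn) (deriv_m_y n Hn))) as H.
  apply (deriv_within_const_on_eq_0 1 Dt_adh Dt) in H.
  - lra.
  - intros y Dy. pose proof (m_norm y (rho_pos y Dy) n Hn). nra.
Qed.

Lemma deriv_dc_relation n C ld : 1 < n -> deriv_within D (dc n C rho rho1) t ld ->
  rho1 t * (1 - cos t) + rho t * sin t + ld * (n - m_y n t)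
  - dc n C rho rho1 t * m_y' n t = 0.
Proof.
  intros Hn Hdc.
  pose proof (deriv_within_plus
    (deriv_within_mult (rho_deriv t Dt) (deriv_within_minus (deriv_within_const 1 t) deriv_cos))
    (deriv_within_mult Hdc (deriv_within_minus (deriv_within_const n t) (deriv_m_y n Hn)))) as H.
  apply (deriv_within_const_on_eq_0 C Dt_adh Dt) in H.
  - lra.
  - intros y Dy. pose proof (m_y_lt y (rho_pos y Dy) n Hn).
    rewrite dc_eq by auto. field. lra.
Qed.

Lemma fc_tangent_orthogonal n C v1 v2 : 1 < n ->
  deriv_within D (fun s => fst (fc n C rho rho1 s)) t v1 ->
  deriv_within D (fun s => snd (fc n C rho rho1 s)) t v2 ->
  n * m_x n t * v1 + (n * m_y n t - 1) * v2 = 0.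
Proof.
  intros Hn Hv1 Hv2.
  destruct (deriv_fc n C Hn) as [ld [Hdc [Hx Hy]]].
  rewrite (deriv_within_unique Dt_adh Hv1 Hx), (deriv_within_unique Dt_adh Hv2 Hy).
  pose proof (refraction_tangential t (rho_pos t Dt) n Hn) as T.
  pose proof (m_norm t (rho_pos t Dt) n Hn) as U.
  pose proof (m_dot_m' n Hn) as M.
  pose proof (deriv_dc_relation n C ld Hn Hdc) as I.
  set (d := dc n C rho rho1 t) in *.
  (* [(n m - e) . f_c'] splits into the Snell identity and the derivatives of
     [|m|^2 = 1] and of [d (n - m_y) = C - rho (1 - cos)]. *)
  transitivity ((n * (m_x n t * (rho1 t * sin t + rho t * cos t)
                      + m_y n t * (rho1 t * cos t - rho t * sin t)) - rho1 t)
                + n * ld * (m_x n t ^ 2 + m_y n t ^ 2 - 1)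
                + n * d * (m_x n t * m_x' n t + m_y n t * m_y' n t)
                + (rho1 t * (1 - cos t) + rho t * sin t + ld * (n - m_y n t) - d * m_y' n t));
    [ring|].
  rewrite T, U, M, I. ring.
Qed.

End Derivatives.
Lemma rho1_0_of_nu_x_0 : 0 < rho 0 -> nu_x 0 = 0 -> rho1 0 = 0.
Proof.
  intros P0 H. pose proof (speed_pos 0 P0).
  unfold nu_x in H. rewrite sin_0, cos_0 in H.
  apply Rmult_integral in H as [H|H]; [lra|].
  apply Rinv_neq_0_compat in H; lra.
Qed.

Section Axis.

Hypothesis rho1_0 : rho1 0 = 0.
Hypothesis rho_0_pos : 0 < rho 0.

Lemma speed_axis : speed 0 = rho 0.
Proof.
  unfold speed. rewrite rho1_0. replace (rho 0 ^ 2 + 0 ^ 2) with (rho 0 * rho 0) by ring.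
  apply sqrt_square. lra.
Qed.

Lemma nu_x_axis : nu_x 0 = 0.
Proof. unfold nu_x. rewrite speed_axis, rho1_0, sin_0, cos_0. field. lra. Qed.

Lemma nu_y_axis : nu_y 0 = 1.
Proof. unfold nu_y. rewrite speed_axis, rho1_0, sin_0, cos_0. field. lra. Qed.

Lemma Phi_incidence_axis n : 1 < n -> Phi n (incidence 0) = 1 - n.
Proof.
  intro Hn. unfold Phi, incidence. rewrite speed_axis.
  replace (rho 0 / rho 0) with 1 by (field; lra).
  replace (n ^ 2 - 1 + 1 ^ 2) with (n * n) by ring. rewrite sqrt_square; lra.
Qed.

Lemma m_x_axis n : m_x n 0 = 0.
Proof. unfold m_x. rewrite nu_x_axis, sin_0. unfold Rdiv. ring. Qed.

Lemma m_y_axis n : 1 < n -> m_y n 0 = 1.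
Proof.
  intro Hn. unfold m_y. rewrite nu_y_axis, Phi_incidence_axis, cos_0 by auto. field. lra.
Qed.

Lemma m_x'_axis n : 1 < n -> m_x' n 0 = (DeltaN n - rho2 0 / rho 0) / DeltaN n.
Proof.
  intro Hn. unfold m_x', nu_x', DeltaN.
  rewrite nu_x_axis, Phi_incidence_axis, speed_axis, rho1_0, sin_0, cos_0 by auto.
  field. lra.
Qed.

End Axis.

End Refraction.

(** * Two refracting curves that coincide *)

Lemma det_eq_0_of_common_null_vector a1 a2 b1 b2 v1 v2 :
  a1 * v1 + a2 * v2 = 0 -> b1 * v1 + b2 * v2 = 0 -> (v1 <> 0 \/ v2 <> 0) ->
  a1 * b2 - a2 * b1 = 0.
Proof.
  intros Ha Hb [Hv|Hv].
  - apply (Rmult_eq_reg_l v1); auto.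
    transitivity (b2 * (a1 * v1 + a2 * v2) - a2 * (b1 * v1 + b2 * v2)); [ring|].
    rewrite Ha, Hb. ring.
  - apply (Rmult_eq_reg_l v2); auto.
    transitivity (a1 * (b1 * v1 + b2 * v2) - b1 * (a1 * v1 + a2 * v2)); [ring|].
    rewrite Ha, Hb. ring.
Qed.

Lemma unit_vectors_eq_of_scaled_eq d1 d2 a1 b1 a2 b2 :
  0 < d1 -> 0 < d2 -> a1 ^ 2 + b1 ^ 2 = 1 -> a2 ^ 2 + b2 ^ 2 = 1 ->
  d1 * a1 = d2 * a2 -> d1 * b1 = d2 * b2 -> d1 = d2 /\ a1 = a2 /\ b1 = b2.
Proof.
  intros Hd1 Hd2 U1 U2 Ea Eb.
  assert (Hsq : d1 * d1 = d2 * d2).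
  { transitivity ((d1 * a1) ^ 2 + (d1 * b1) ^ 2); [rewrite <- (Rmult_1_r (d1 * d1)), <- U1; ring|].
    rewrite Ea, Eb. rewrite <- (Rmult_1_r (d2 * d2)), <- U2. ring. }
  assert (Hd : d1 = d2) by nra.
  subst d2. repeat split; auto; apply (Rmult_eq_reg_l d1); lra.
Qed.

Section Matching.

Variables (D : R -> Prop) (rho rho1 rho2 : R -> R) (nr nb Cr Cb : R) (phi phi1 : R -> R).

Hypothesis D_adh : forall x, D x -> adhDa (punctured D x) x.
Hypothesis rho_deriv : forall t, D t -> deriv_within D rho t (rho1 t).
Hypothesis rho1_deriv : forall t, D t -> deriv_within D rho1 t (rho2 t).
Hypothesis rho_pos : forall t, D t -> 0 < rho t.
Hypothesis nr_gt_1 : 1 < nr.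
Hypothesis nb_gt_1 : 1 < nb.
Hypothesis nr_neq_nb : nr <> nb.
Hypothesis dc_r_pos : forall t, D t -> 0 < dc nr Cr rho rho1 t.
Hypothesis dc_b_pos : forall t, D t -> 0 < dc nb Cb rho rho1 t.
Hypothesis normal_r : has_normal_everywhere D (fc nr Cr rho rho1).
Hypothesis normal_b : has_normal_everywhere D (fc nb Cb rho rho1).
Hypothesis phi_maps : forall t, D t -> D (phi t).
Hypothesis phi_deriv : forall t, D t -> deriv_within D phi t (phi1 t).
Hypothesis fc_match : forall t, D t -> fc nr Cr rho rho1 t = fc nb Cb rho rho1 (phi t).

Lemma refraction_parallel t : D t ->
  (nr * m_x rho rho1 nr t) * (nb * m_y rho rho1 nb (phi t) - 1)
  - (nr * m_y rho rho1 nr t - 1) * (nb * m_x rho rho1 nb (phi t)) = 0.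
Proof.
  intro Dt. pose proof (phi_maps t Dt) as Dpt.
  destruct (normal_r t Dt) as [v1 [v2 [Hv1 [Hv2 Hnz]]]].
  destruct (normal_b (phi t) Dpt) as [w1 [w2 [Hw1 [Hw2 _]]]].
  assert (E1 : v1 = w1 * phi1 t).
  { refine (deriv_within_unique (D_adh t Dt) Hv1
              (deriv_within_reparam phi_maps Dt _ (phi_deriv t Dt) Hw1)).
    intros y Dy. cbv beta. rewrite fc_match; auto. }
  assert (E2 : v2 = w2 * phi1 t).
  { refine (deriv_within_unique (D_adh t Dt) Hv2
              (deriv_within_reparam phi_maps Dt _ (phi_deriv t Dt) Hw2)).
    intros y Dy. cbv beta. rewrite fc_match; auto. }
  pose proof (fc_tangent_orthogonal rho rho1 rho2 D rho_deriv rho1_deriv rho_pos t Dt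
                (D_adh t Dt) nr Cr v1 v2 nr_gt_1 Hv1 Hv2) as Pr.
  pose proof (fc_tangent_orthogonal rho rho1 rho2 D rho_deriv rho1_deriv rho_pos (phi t) Dpt
                (D_adh _ Dpt) nb Cb w1 w2 nb_gt_1 Hw1 Hw2) as Pb.
  apply (det_eq_0_of_common_null_vector _ _ _ _ v1 v2 Pr); auto.
  rewrite E1, E2. rewrite <- (Rmult_0_r (phi1 t)), <- Pb. ring.
Qed.

(* At a fixed point the two refracted rays coincide, so parallelism forces [m_x = 0];
   then [sin z = Phi_n (x . nu) nu_x] for two different [n] forces [nu_x = 0]. *)
Lemma fixed_point_on_axis z : D z -> phi z = z ->
  sin z = 0 /\ nu_x rho rho1 z = 0 /\ dc nr Cr rho rho1 z = dc nb Cb rho rho1 z.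
Proof.
  intros Dz Fz. pose proof (rho_pos z Dz) as Pz.
  pose proof (fc_match z Dz) as Ez. rewrite Fz, !fc_components in Ez by auto.
  injection Ez as Ex Ey.
  destruct (unit_vectors_eq_of_scaled_eq _ _ _ _ _ _ (dc_r_pos z Dz) (dc_b_pos z Dz)
              (m_norm rho rho1 z Pz nr nr_gt_1) (m_norm rho rho1 z Pz nb nb_gt_1)
              ltac:(lra) ltac:(lra)) as [Ed [Emx Emy]].
  pose proof (refraction_parallel z Dz) as Hpar. rewrite Fz, <- Emx, <- Emy in Hpar.
  assert (Hmx : m_x rho rho1 nr z = 0).
  { assert (H : m_x rho rho1 nr z * (nb - nr) = 0) by (rewrite <- Hpar; ring).
    apply Rmult_integral in H as [H|H]; lra. }
  assert (Hsin : forall n, 1 < n -> m_x rho rho1 n z = 0 ->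
            sin z = Phi n (incidence rho rho1 z) * nu_x rho rho1 z).
  { intros n Hn H. unfold m_x in H. apply Rmult_integral in H as [H|H].
    - lra.
    - apply Rinv_neq_0_compat in H; lra. }
  pose proof (Hsin nr nr_gt_1 Hmx) as Sr.
  pose proof (Hsin nb nb_gt_1 ltac:(lra)) as Sb.
  set (p := incidence rho rho1 z) in *.
  assert (Hnu : (Phi nr p - Phi nb p) * nu_x rho rho1 z = 0) by lra.
  apply Rmult_integral in Hnu as [Hnu|Hnu].
  - exfalso. apply nr_neq_nb. apply (Phi_index_injective _ _ p); auto. lra.
  - rewrite Sr, Hnu. repeat split; auto. ring.
Qed.

Section AtAxis.

Hypothesis D_0 : D 0.
Hypothesis phi_0 : phi 0 = 0.
Hypothesis rho1_0 : rho1 0 = 0.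

Let rho_0_pos : 0 < rho 0 := rho_pos 0 D_0.

Let deriv_comp_phi f l :
  deriv_within D f (phi 0) l -> deriv_within D (fun t => f (phi t)) 0 (l * phi1 0) :=
  fun Hf => deriv_within_comp phi_maps Hf (phi_deriv 0 D_0).

Lemma refraction_parallel_deriv_axis :
  DeltaN nr - rho2 0 / rho 0 = (DeltaN nb - rho2 0 / rho 0) * phi1 0.
Proof.
  pose proof (phi_maps 0 D_0) as Dphi0.
  pose proof (deriv_m_x rho rho1 rho2 D rho_deriv rho1_deriv rho_pos 0 D_0 nr nr_gt_1) as Hxr.
  pose proof (deriv_m_y rho rho1 rho2 D rho_deriv rho1_deriv rho_pos 0 D_0 nr nr_gt_1) as Hyr.
  pose proof (deriv_comp_phi _ _
    (deriv_m_x rho rho1 rho2 D rho_deriv rho1_deriv rho_pos _ Dphi0 nb nb_gt_1)) as Hxb.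
  pose proof (deriv_comp_phi _ _
    (deriv_m_y rho rho1 rho2 D rho_deriv rho1_deriv rho_pos _ Dphi0 nb nb_gt_1)) as Hyb.
  pose proof (deriv_within_minus
    (deriv_within_mult (deriv_within_mult (deriv_within_const nr 0) Hxr)
       (deriv_within_minus (deriv_within_mult (deriv_within_const nb 0) Hyb)
          (deriv_within_const 1 0)))
    (deriv_within_mult
       (deriv_within_minus (deriv_within_mult (deriv_within_const nr 0) Hyr)
          (deriv_within_const 1 0))
       (deriv_within_mult (deriv_within_const nb 0) Hxb))) as H.
  apply (deriv_within_const_on_eq_0 0 (D_adh 0 D_0) D_0) in H;
    [|intros y Dy; exact (refraction_parallel y Dy)].
  cbv beta in H.
  rewrite phi_0, !(m_x_axis _ _ rho1_0 rho_0_pos), (m_y_axis _ _ rho1_0 rho_0_pos nr nr_gt_1),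
    (m_y_axis _ _ rho1_0 rho_0_pos nb nb_gt_1), (m_x'_axis _ _ _ rho1_0 rho_0_pos nr nr_gt_1),
    (m_x'_axis _ _ _ rho1_0 rho_0_pos nb nb_gt_1) in H.
  unfold DeltaN in *. set (a := rho2 0 / rho 0) in *.
  apply (Rmult_eq_reg_l ((nr - 1) * (nb - 1))); [|nra].
  transitivity (nr * ((nr / (nr - 1) - a) / (nr / (nr - 1))) * (nb - 1)); [field; lra|].
  transitivity ((nr - 1) * (nb * ((nb / (nb - 1) - a) / (nb / (nb - 1)) * phi1 0)));
    [lra|field; lra].
Qed.

Lemma fc_x_deriv_axis :
  dc nr Cr rho rho1 0 = dc nb Cb rho rho1 0 ->
  rho 0 + dc nr Cr rho rho1 0 * ((DeltaN nr - rho2 0 / rho 0) / DeltaN nr)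
  = (rho 0 + dc nr Cr rho rho1 0 * ((DeltaN nb - rho2 0 / rho 0) / DeltaN nb)) * phi1 0.
Proof.
  intros Ed.
  destruct (deriv_fc rho rho1 rho2 D rho_deriv rho1_deriv rho_pos 0 D_0 nr Cr nr_gt_1)
    as [lr [_ [Hr _]]].
  destruct (deriv_fc rho rho1 rho2 D rho_deriv rho1_deriv rho_pos _ (phi_maps 0 D_0) nb Cb nb_gt_1)
    as [lb [_ [Hb _]]].
  assert (Hrb := deriv_within_reparam phi_maps D_0
                   (fun y Dy => f_equal fst (fc_match y Dy)) (phi_deriv 0 D_0) Hb).
  pose proof (deriv_within_unique (D_adh 0 D_0) Hr Hrb) as E.
  rewrite phi_0, rho1_0, sin_0, cos_0, !(m_x_axis _ _ rho1_0 rho_0_pos),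
    (m_x'_axis _ _ _ rho1_0 rho_0_pos nr nr_gt_1), (m_x'_axis _ _ _ rho1_0 rho_0_pos nb nb_gt_1), <- Ed in E.
  lra.
Qed.

End AtAxis.

End Matching.

(** * The bound on k_0 *)

Lemma DeltaN_pos n : 1 < n -> 0 < DeltaN n.
Proof. intro. unfold DeltaN. apply Rdiv_lt_0_compat; lra. Qed.

Lemma DeltaN_injective n1 n2 : 1 < n1 -> 1 < n2 -> DeltaN n1 = DeltaN n2 -> n1 = n2.
Proof.
  intros H1 H2 E. unfold DeltaN in E.
  assert (n1 * (n2 - 1) = n2 * (n1 - 1)).
  { transitivity (n1 / (n1 - 1) * ((n1 - 1) * (n2 - 1))); [field; lra|].
    rewrite E. field. lra. }
  lra.
Qed.

Lemma k0_bound_of_axis_equations Dr Db r d a q :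
  0 < Dr -> 0 < Db -> Dr <> Db -> 0 < d ->
  Dr - a = (Db - a) * q ->
  r + d * ((Dr - a) / Dr) = (r + d * ((Db - a) / Db)) * q ->
  r / d <= (Dr - Db) ^ 2 / (4 * Dr * Db).
Proof.
  intros HDr HDb Hne Hd Eq Ef.
  set (X := Dr - a) in *. set (Y := Db - a) in *.
  assert (Ef' : r * Dr * Db + d * X * Db = (r * Dr * Db + d * Y * Dr) * q).
  { transitivity ((r + d * (X / Dr)) * (Dr * Db)); [field; lra|].
    rewrite Ef. field. lra. }
  assert (HY : Y * (q - 1) = Dr - Db) by (unfold X, Y in *; lra).
  assert (HY' : d * X * (Y * (q - 1)) = d * X * (Dr - Db)) by (rewrite HY; reflexivity).
  assert (Hrel : (q - 1) * (r * Dr * Db + d * X * Y) = 0).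
  { rewrite Eq in Ef', HY' |- *. lra. }
  assert (Hq : q - 1 <> 0) by (intro H; rewrite H, Rmult_0_r in HY; lra).
  assert (Hk : r * Dr * Db = - (d * X * Y)).
  { apply Rmult_integral in Hrel as [H|H]; [contradiction|lra]. }
  apply Rmult_le_reg_r with (4 * Dr * Db * d); [apply Rmult_lt_0_compat; nra|].
  replace (r / d * (4 * Dr * Db * d)) with (4 * (r * Dr * Db)) by (field; lra).
  replace ((Dr - Db) ^ 2 / (4 * Dr * Db) * (4 * Dr * Db * d))
    with (d * (X - Y) ^ 2) by (unfold X, Y; field; lra).
  rewrite Hk. pose proof (Rmult_le_pos d ((X + Y) ^ 2) ltac:(lra) (pow2_ge_0 (X + Y))). nra.
Qed.

Lemma Icl_sin_eq_0 delta z : delta < PI -> Icl delta z -> sin z = 0 -> z = 0.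
Proof.
  intros Hd [H1 H2] Hs.
  destruct (Rtotal_order z 0) as [Hz|[Hz|Hz]]; auto.
  - pose proof (sin_gt_0 (- z)). rewrite sin_neg in *. lra.
  - pose proof (sin_gt_0 z). lra.
Qed.

Theorem corollary5p8 (nr nb : R) (Hn : 1 < nr /\ nr < nb)
  (delta : R) (rho rho1 rho2 : R -> R) (Cr Cb : R) (phi phi1 : R -> R) :
  local_solution nr nb delta rho rho1 rho2 Cr Cb phi phi1 ->
  rho 0 / dc nr Cr rho rho1 0 <=
    (DeltaN nr - DeltaN nb) ^ 2 / (4 * DeltaN nr * DeltaN nb).
Proof.
  intros [[Hdelta Hdelta_pi] [rho_pos [[rho_deriv [rho1_deriv _]] [dc_r_pos [dc_b_pos
           [normal_r [normal_b [phi_maps [[phi_deriv _] fc_match]]]]]]]]].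
  destruct Hn as [nr_gt_1 nr_lt_nb].
  assert (nb_gt_1 : 1 < nb) by lra.
  assert (nr_neq_nb : nr <> nb) by lra.
  assert (D_adh : forall x, Icl delta x -> adhDa (punctured (Icl delta) x) x)
    by (intros; apply Icl_adhDa; auto).
  assert (D_0 : Icl delta 0) by (unfold Icl; lra).
  destruct (Icl_fixed_point delta phi Hdelta phi_maps
              (fun t Dt => deriv_within_cont_within (phi_deriv t Dt))) as [z [Dz phi_z]].
  destruct (fixed_point_on_axis (Icl delta) rho rho1 rho2 nr nb Cr Cb phi phi1)
    with (z := z) as [sin_z [nu_x_z dc_0]]; auto.
  assert (z = 0) by (apply (Icl_sin_eq_0 delta); auto; lra). subst z.
  pose proof (rho_pos 0 D_0) as rho_0_pos.
  assert (rho1_0 : rho1 0 = 0) by (apply (rho1_0_of_nu_x_0 rho); auto).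
  apply (k0_bound_of_axis_equations _ _ _ _ (rho2 0 / rho 0) (phi1 0)).
  - apply DeltaN_pos; auto.
  - apply DeltaN_pos; auto.
  - intro E. apply DeltaN_injective in E; auto.
  - apply dc_r_pos, D_0.
  - eapply (refraction_parallel_deriv_axis (Icl delta)); eauto.
  - eapply (fc_x_deriv_axis (Icl delta)); eauto.
Qed.
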